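(* Let $r\geq k+1$. Let $\mathcal{P}$ be a finite classical polar space of rank $r$ with parameter $e$ naturally embedded in $V(n,q)$, and let $H$ be a degenerate hyperplane of $\mathcal{P}$ in $V(n,q)$. Then the number of $k$-spaces of $\mathcal{P}$ contained in $H$ equals \[ \frac{q^{2r+e-k-1}+q^r-q^{r+e-1}-1}{(q^r-1)(q^{r+e-1}+1)} \] times the total number of $k$-spaces of $\mathcal{P}$.
   Context: A finite classical polar space is the geometry of totally isotropic (totally singular) subspaces of $V(n,q)=\mathbb{F}_q^n$ with respect to a non-degenerate quadratic form or non-degenerate reflexive sesquilinear form, with associated polarity $\perp$. Dimensions are algebraic: a $k$-space of $\mathcal{P}$ is a totally isotropic subspace of vector dimension $k$; the rank $r$ is the maximal such dimension and generators are the $r$-spaces. The parameter $e$ is defined by the property that every $(r-1)$-space lies in exactly $q^e+1$ generators ($e=0$ for $Q^+(2r-1,q)$, $1/2$ for $H(2r-1,q)$, $1$ for $W(2r-1,q)$ and $Q(2r,q)$, $3/2$ for $H(2r,q)$, $2$ for $Q^-(2r+1,q)$). A degenerate hyperplane of $\mathcal{P}$ is a hyperplane $H$ of $V(n,q)$ of the form $H=P^\perp$ for a point (1-space) $P$ of $\mathcal{P}$, i.e. a tangent hyperplane; then $H\cap\mathcal{P}$ is a cone with vertex $P$ over a polar space of the same type with rank $r-1$. *)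

(* finite classical polar spaces over a finite field F,
   living in V(n,q) = 'rV[F]_n, subspaces represented by square matrices
   (row spaces), canonically normalised via <<_>>%MS. *)
From HB Require Import structures.
From mathcomp Require Import all_boot all_order all_algebra.
Set Implicit Arguments. Unset Strict Implicit. Unset Printing Implicit Defensive.
Import GRing.Theory Num.Theory.
Local Open Scope ring_scope.

Section Polar.
Variables (F : finFieldType) (n : nat).

(* The form defining the polar space:
   - QuadForm M : quadratic form Q(v) = v M v^T (orthogonal polar spaces);
   - AltForm M  : alternating bilinear form u M v^T (symplectic);
   - HermForm s M : Hermitian form u M (s v)^T, s an involutory automorphism. *)
Inductive polar_form :=
| QuadForm of 'M[F]_n
| AltForm of 'M[F]_n
| HermForm of {rmorphism F -> F} & 'M[F]_n.

Definition qform (M : 'M[F]_n) (v : 'rV[F]_n) : F := (v *m M *m v^T) 0 0.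
Definition bilin (M : 'M[F]_n) (u v : 'rV[F]_n) : F := (u *m M *m v^T) 0 0.
Definition sesq (s : {rmorphism F -> F}) (M : 'M[F]_n) (u v : 'rV[F]_n) : F :=
  (u *m M *m (map_mx s v)^T) 0 0.

Definition pform (pf : polar_form) : 'rV[F]_n -> 'rV[F]_n -> F :=
  match pf with
  | QuadForm M => fun u v => qform M (u + v) - qform M u - qform M v
  | AltForm M => bilin M
  | HermForm s M => sesq s M
  end.

Definition nondeg (pf : polar_form) : Prop :=
  match pf with
  | QuadForm M => forall v, qform M v = 0 -> (forall u, pform pf u v = 0) -> v = 0
  | AltForm M => M^T = - M /\ (forall i, M i i = 0) /\ \det M != 0
  | HermForm s M => (forall x, s (s x) = x) /\ (exists x, s x != x) /\
                    M^T = map_mx s M /\ \det M != 0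
  end.

Definition tot_iso (pf : polar_form) m (U : 'M[F]_(m, n)) : bool :=
  match pf with
  | QuadForm M => [forall u : 'rV[F]_n, (u <= U)%MS ==> (qform M u == 0)]
  | _ => [forall u : 'rV[F]_n, forall v : 'rV[F]_n,
            (u <= U)%MS ==> (v <= U)%MS ==> (pform pf u v == 0)]
  end.

(* subspaces of V(n,q), one canonical matrix per subspace *)
Definition is_subspace (U : 'M[F]_n) : bool := (<<U>>%MS == U).

(* the k-spaces (vector dimension k) of the polar space *)
Definition kspaces (pf : polar_form) (k : nat) : {set 'M[F]_n} :=
  [set U : 'M[F]_n | [&& is_subspace U, \rank U == k & tot_iso pf U]].

Definition polar_rank (pf : polar_form) (r : nat) : Prop :=
  (exists U : 'M[F]_n, tot_iso pf U && (\rank U == r)) /\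
  (forall U : 'M[F]_n, tot_iso pf U -> (\rank U <= r)%N).

(* every (r-1)-space lies in exactly qe+1 generators (qe plays q^e) *)
Definition gen_param (pf : polar_form) (r qe : nat) : Prop :=
  forall W : 'M[F]_n, tot_iso pf W -> \rank W = r.-1 ->
    #|[set G in kspaces pf r | (W <= G)%MS]| = qe.+1.

Definition in_perp (pf : polar_form) (p : 'rV[F]_n) (U : 'M[F]_n) : bool :=
  [forall u : 'rV[F]_n, (u <= U)%MS ==> (pform pf u p == 0)].

End Polar.

From HB Require Import structures.
From mathcomp Require Import all_boot all_order all_algebra.
From mathcomp Require Import zify ring.
Set Implicit Arguments. Unset Strict Implicit. Unset Printing Implicit Defensive.
Import GRing.Theory Num.Theory.
Local Open Scope ring_scope.

(* Double count the pairs (k-space, generator).  By induction on [r - \rank U],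
   extending [U] by a point of [U^perp] outside [U], a totally isotropic subspace
   [U] lies in [\prod_(i < r - \rank U) (1 + q^e q^i)] generators, and a generator,
   like any r-space, contains a fixed number of k-spaces.  A k-space inside
   [H = p^perp] lies in a generator [G] either through [p], in which case
   [G <= H], or inside the (r-1)-space [G :&: H]; counting the two kinds of
   generators gives the ratio. *)

Section RowSpaceCounting.
Variables (F : finFieldType) (n : nat).
Local Notation q := #|F|.

Lemma card_rV_submx m (A : 'M[F]_(m, n)) :
  #|[pred x : 'rV[F]_n | (x <= A)%MS]| = (q ^ \rank A)%N.
Proof.
pose coord (y : 'rV[F]_(\rank A)) := y *m row_base A.
have coord_inj : injective coord by apply/row_free_inj/row_base_free.
have im_coord : [pred x : 'rV[F]_n | (x <= A)%MS] =i coord @: [set: 'rV_(\rank A)].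
  move=> x; rewrite !inE -(eq_row_base A); apply/idP/imsetP.
    by case/submxP=> y ->; exists y.
  by case=> y _ ->; apply: submxMl.
by rewrite (eq_card im_coord) card_imset // cardsT card_mx mul1n.
Qed.

Lemma card_rV_submx_notin (A C : 'M[F]_n) : (C <= A)%MS ->
  #|[pred y : 'rV[F]_n | (y <= A)%MS && ~~ (y <= C)%MS]|
    = (q ^ \rank A - q ^ \rank C)%N.
Proof.
move=> sCA; rewrite -!card_rV_submx.
rewrite -(cardID [pred y : 'rV[F]_n | (y <= C)%MS] [pred y | (y <= A)%MS]).
rewrite [#|[predI _ & _]|](eq_card (B := [pred y : 'rV[F]_n | (y <= C)%MS])).
  by rewrite addKn; apply: eq_card => y; rewrite !inE andbC.
move=> y; rewrite !inE; apply/andP/idP => [[]//|sy].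
by split=> //; apply: submx_trans sCA.
Qed.

Lemma mxrank_adds_rV (C : 'M[F]_n) (y : 'rV[F]_n) :
  \rank (C + y)%MS = (\rank C + ~~ (y <= C)%MS)%N.
Proof.
have [sub_le sub_eq] := mxrank_leqif_sup (addsmxSl C y).
have rank_le : (\rank (C + y)%MS <= \rank C + 1)%N.
  by apply: leq_trans (mxrank_adds_leqif C y) _; rewrite leq_add2l rank_leq_row.
rewrite addsmx_sub submx_refl /= in sub_eq.
case: (boolP (y <= C)%MS) sub_eq => /= [_ /eqP <-|_ /negbT]; first by rewrite addn0.
lia.
Qed.

Definition qprod a b k := (\prod_(i < k) (q ^ a - q ^ (b + i)))%N.

Lemma qprodSS a b k : qprod a.+1 b.+1 k = (q ^ k * qprod a b k)%N.
Proof.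
rewrite /qprod; elim: k => [|k IHk]; first by rewrite !big_ord0.
by rewrite !big_ord_recr /= IHk addSn !expnS -mulnBr; ring.
Qed.

Lemma qprod_gt0 b k : (0 < qprod (b + k) b k)%N.
Proof.
apply: prodn_gt0 => i; rewrite subn_gt0 ltn_exp2l ?card_finNzRing_gt1 //.
by rewrite ltn_add2l.
Qed.

Lemma qprodS_mul m k : (k <= m)%N ->
  (qprod m 0 k * (q ^ m.+1 - 1) = qprod m.+1 0 k * (q ^ (m.+1 - k) - 1))%N.
Proof.
case: k => [|k] le_km; first by rewrite /qprod !big_ord0 subn0.
have -> : qprod m 0 k.+1 = (qprod m 0 k * (q ^ m - q ^ k))%N by rewrite /qprod big_ord_recr.
have -> : qprod m.+1 0 k.+1 = ((q ^ m.+1 - 1) * qprod m.+1 1 k)%N.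
  by rewrite /qprod big_ord_recl expn0.
have -> : (q ^ m - q ^ k = q ^ k * (q ^ (m - k) - 1))%N.
  by rewrite mulnBr muln1 -expnD subnKC //; lia.
by rewrite qprodSS subSS; ring.
Qed.

Lemma card_expr_sub1_neq0 m : (0 < m)%N -> (#|F|%:R ^+ m - 1 : rat) != 0.
Proof.
move=> m_gt0; have : (1 < q ^ m)%N by rewrite -{1}(expn0 q) ltn_exp2l ?card_finNzRing_gt1.
by rewrite subr_eq0 -natrX pnatr_eq1; lia.
Qed.

Definition ext_rows (A B : 'M[F]_n) k : {set 'M[F]_(k, n)} :=
  [set X | (X <= A)%MS && (\rank (B + X)%MS == \rank B + k)%N].

Lemma ext_rows0 (A B : 'M[F]_n) : ext_rows A B 0 = setT.
Proof.
by apply/setP=> X; rewrite !inE (flatmx0 X) sub0mx addsmx0 addn0 eqxx.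
Qed.

Lemma ext_rows_col_mx (A B : 'M[F]_n) k (y : 'rV[F]_n) (Z : 'M[F]_(k, n)) :
  (col_mx y Z \in ext_rows A B (1 + k))
    = [&& Z \in ext_rows A B k, (y <= A)%MS & ~~ (y <= B + Z)%MS].
Proof.
have rank_BZ : (\rank (B + Z)%MS <= \rank B + k)%N.
  by apply: leq_trans (mxrank_adds_leqif B Z) _; rewrite leq_add2l rank_leq_row.
rewrite !inE col_mx_sub (adds_eqmx (eqmx_refl B) (eqmx_sym (addsmxE y Z))).
rewrite (addsmxC y Z) addsmxA mxrank_adds_rV.
case: (y <= A)%MS; case: (Z <= A)%MS; rewrite ?andbF //=.
case: (y <= B + Z)%MS; rewrite ?andbF ?andbT; [apply/negbTE/eqP | apply/eqP/eqP]; lia.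
Qed.

Lemma card_ext_rowsS (A B : 'M[F]_n) k : (B <= A)%MS ->
  #|ext_rows A B k.+1| = (#|ext_rows A B k| * (q ^ \rank A - q ^ (\rank B + k)))%N.
Proof.
move=> sBA.
have split_bij : {on [pred X | X \in ext_rows A B (1 + k)],
    bijective (fun p : 'M[F]_(k, n) * 'rV[F]_n => col_mx p.2 p.1 : 'M_(1 + k, n))}.
  apply: onW_bij; exists (fun X : 'M_(1 + k, n) => (dsubmx X, usubmx X)).
    by case=> Z y; rewrite /= col_mxKd col_mxKu.
  by move=> X; rewrite /= vsubmxK.
rewrite -sum1_card (reindex _ split_bij) /=.
rewrite -(pair_big_dep xpredT (fun Z y => col_mx y Z \in ext_rows A B (1 + k))
  (fun _ _ => 1%N)) /=.
rewrite -sum1_card big_distrl /= big_mkcond [in RHS]big_mkcond /=.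
apply: eq_bigr => Z _; under eq_bigl do rewrite ext_rows_col_mx.
case: ifP => [|_]; last by rewrite big_pred0.
rewrite inE => /andP[sZA /eqP rZ].
by rewrite mul1n sum1_card -rZ -card_rV_submx_notin ?addsmx_sub ?sBA.
Qed.

Lemma card_ext_rows (A B : 'M[F]_n) k : (B <= A)%MS ->
  #|ext_rows A B k| = qprod (\rank A) (\rank B) k.
Proof.
move=> sBA; elim: k => [|k IHk]; first by rewrite ext_rows0 cardsT card_mx /qprod big_ord0.
by rewrite card_ext_rowsS // IHk /qprod big_ord_recr.
Qed.

Definition subspaces_between (B A : 'M[F]_n) d : {set 'M[F]_n} :=
  [set H | [&& is_subspace H, (B <= H)%MS, (H <= A)%MS & \rank H == d]].

Lemma genmx_subspace_sub (H : 'M[F]_n) m (C : 'M[F]_(m, n)) :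
  is_subspace H -> (C <= H)%MS -> \rank C = \rank H -> <<C>>%MS = H.
Proof.
move=> /eqP defH sCH rC; rewrite -defH; apply/genmxP.
by rewrite -(mxrank_leqif_eq sCH) rC.
Qed.

Lemma genmx_subspace_sup (H : 'M[F]_n) m (C : 'M[F]_(m, n)) :
  is_subspace H -> (H <= C)%MS -> \rank C = \rank H -> <<C>>%MS = H.
Proof.
move=> /eqP defH sHC rC; rewrite -defH; apply/esym/genmxP.
by rewrite -(mxrank_leqif_eq sHC) rC.
Qed.

Lemma card_subspaces_between (B A : 'M[F]_n) k (P : pred 'M[F]_n) :
  (B <= A)%MS ->
  (#|[set H in subspaces_between B A (\rank B + k) | P H]|
     * qprod (\rank B + k) (\rank B) k
   = #|[set X in ext_rows A B k | P <<(B + X)%MS>>%MS]|)%N.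
Proof.
move=> sBA; rewrite -sum_nat_const -[RHS]sum1_card.
rewrite [RHS](partition_big (fun X => <<(B + X)%MS>>%MS)
  (fun H => H \in [set H in subspaces_between B A (\rank B + k) | P H])); last first.
  move=> X; rewrite !inE => /andP[/andP[sXA rX] PX].
  by rewrite /is_subspace genmx_id eqxx mxrank_gen !genmxE addsmxSl addsmx_sub sBA sXA rX PX.
apply: eq_bigr => H; rewrite !inE => /andP[/and4P[sH sBH sHA /eqP rH] PH].
rewrite -rH -card_ext_rows // -sum1_card; apply: eq_bigl => X; rewrite !inE.
apply/idP/idP => [/andP[sXH rX]|/andP[/andP[/andP[_ rX] _] /eqP <-]].
  have eH : <<(B + X)%MS>>%MS = H.
    by apply: genmx_subspace_sub; rewrite ?addsmx_sub ?sBH // (eqP rX) rH.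
  by rewrite (submx_trans sXH sHA) rX eH PH eqxx.
by rewrite genmxE addsmxSr rX.
Qed.

Lemma card_subspaces (A : 'M[F]_n) (k : nat) :
  (#|subspaces_between 0 A k| * qprod k 0 k = qprod (\rank A) 0 k)%N.
Proof.
have := card_subspaces_between k predT (sub0mx n A).
rewrite mxrank0 add0n -(mxrank0 F n n) -card_ext_rows ?sub0mx //.
have -> : [set H in subspaces_between 0 A k | predT H] = subspaces_between 0 A k.
  by apply/setP => H; rewrite !inE andbT.
by move=> ->; apply: eq_card => X; rewrite !inE andbT.
Qed.

Lemma card_subspaces_avoiding (G U : 'M[F]_n) (x : 'rV[F]_n) m :
  (U + x <= G)%MS -> ~~ (x <= U)%MS -> \rank G = (\rank U + m).+1 ->
  #|[set H in subspaces_between U G (\rank U + m) | ~~ (x <= H)%MS]| = (q ^ m)%N.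
Proof.
move=> sUxG xU rG; have sUG := submx_trans (addsmxSl U x) sUxG.
have := card_subspaces_between m (fun H => ~~ (x <= H)%MS) sUG.
have -> : [set X in ext_rows G U m | ~~ (x <= <<(U + X)%MS>>)%MS]
          = ext_rows G (U + x)%MS m.
  apply/setP => X; rewrite !inE genmxE.
  have rank_UX : (\rank (U + X)%MS <= \rank U + m)%N.
    by apply: leq_trans (mxrank_adds_leqif U X) _; rewrite leq_add2l rank_leq_row.
  rewrite -addsmxA (addsmxC x X) addsmxA !mxrank_adds_rV xU.
  case: (X <= G)%MS; case: (x <= U + X)%MS; rewrite /= ?andbF ?andbT //;
    [apply/esym/negbTE/eqP | apply/eqP/eqP]; lia.
rewrite (@card_ext_rows G (U + x)%MS m) // rG mxrank_adds_rV xU addn1 qprodSS.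
by move/eqP; rewrite eqn_pmul2r ?qprod_gt0 // => /eqP.
Qed.

End RowSpaceCounting.

Section Forms.
Variables (F : finFieldType) (n : nat) (pf : polar_form F n).

Definition form_aut : {rmorphism F -> F} :=
  match pf with HermForm s _ => s | _ => idfun end.

Definition form_mx : 'M[F]_n :=
  match pf with QuadForm M => M + M^T | AltForm M => M | HermForm _ M => M end.

Definition form (u v : 'rV[F]_n) : F := (u *m form_mx *m (map_mx form_aut v)^T) 0 0.

Lemma form_trC (M : 'M[F]_n) (u v : 'rV[F]_n) :
  (v *m M *m u^T) 0 0 = (u *m M^T *m v^T) 0 0.
Proof.
transitivity ((v *m M *m u^T)^T 0 0); first by rewrite [RHS]mxE.
by rewrite !trmx_mul trmxK mulmxA.
Qed.

Lemma pformE u v : pform pf u v = form u v.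
Proof.
rewrite /form /form_aut /form_mx; case: pf => [M|M|s M] //=; rewrite map_mx_id //.
have addE (A B : 'M[F]_1) : (A + B) 0 0 = A 0 0 + B 0 0 by rewrite mxE.
rewrite /qform linearD /= !mulmxDl !mulmxDr !addE (form_trC M u v) mulmxDl addE.
ring.
Qed.

Lemma formDl u1 u2 v : form (u1 + u2) v = form u1 v + form u2 v.
Proof. by rewrite /form !mulmxDl mxE. Qed.

Lemma formDr u v1 v2 : form u (v1 + v2) = form u v1 + form u v2.
Proof. by rewrite /form map_mxD linearD /= mulmxDr mxE. Qed.

Lemma formZr a u v : form u (a *: v) = form_aut a * form u v.
Proof. by rewrite /form map_mxZ linearZ /= -scalemxAr mxE. Qed.

Definition perpmx m (U : 'M[F]_(m, n)) : 'M[F]_n :=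
  kermx (form_mx *m (map_mx form_aut U)^T).

Lemma perpP m (U : 'M[F]_(m, n)) v :
  reflect (forall u, (u <= U)%MS -> form v u = 0) (v <= perpmx U)%MS.
Proof.
rewrite sub_kermx; apply: (iffP eqP) => [vU0 u /submxP[D ->]|vU0].
  by rewrite /form map_mxM trmx_mul !mulmxA -(mulmxA v) vU0 !mul0mx mxE.
apply/rowP => i; rewrite [RHS]mxE -(vU0 _ (row_sub i U)) /form mulmxA !mxE.
by apply: eq_bigr => j _; rewrite !mxE.
Qed.

Lemma perpmxP m (A : 'M[F]_(m, n)) m' (B : 'M[F]_(m', n)) :
  reflect (forall a b, (a <= A)%MS -> (b <= B)%MS -> form a b = 0)
          (A <= perpmx B)%MS.
Proof.
apply: (iffP idP) => [sAB a b sa|AB0].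
  by apply/perpP; apply: submx_trans sa sAB.
by apply/row_subP => i; apply/perpP => b; apply: AB0; apply: row_sub.
Qed.

Lemma mxrank_perpmx m (U : 'M[F]_(m, n)) : (n - \rank U <= \rank (perpmx U))%N.
Proof.
rewrite mxrank_ker leq_sub2l //.
by apply: leq_trans (mxrankM_maxr _ _) _; rewrite mxrank_tr mxrank_map.
Qed.

Lemma form_eq0C : nondeg pf -> forall u v, form u v = 0 -> form v u = 0.
Proof.
move=> ndg u v; rewrite /form /form_mx /form_aut; case: pf ndg => [M|M|s M] /=.
- by move=> _; rewrite !map_mx_id // => uv0; rewrite form_trC linearD /= trmxK addrC.
- case=> MT _; rewrite !map_mx_id // => uv0.
  by rewrite form_trC MT mulmxN mulNmx mxE uv0 oppr0.
case=> ss [_ [MT _]] uv0.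
have : (map_mx s (u *m M *m (map_mx s v)^T)) 0 0 = 0 by rewrite mxE uv0 rmorph0.
rewrite !map_mxM -map_trmx -MT form_trC trmxK.
suff -> : map_mx s (map_mx s v) = v by [].
by apply/matrixP => i j; rewrite !mxE ss.
Qed.

Lemma tot_isoS m1 m2 (V : 'M[F]_(m1, n)) (U : 'M[F]_(m2, n)) :
  (V <= U)%MS -> tot_iso pf U -> tot_iso pf V.
Proof.
move=> sVU; case: pf => [M|M|s M] /= /forallP isoU; apply/forallP => u.
  by apply/implyP => su; apply: (implyP (isoU u)); apply: submx_trans sVU.
all: apply/forallP => v; apply/implyP => su; apply/implyP => sv.
all: by have /forallP/(_ v) := isoU u; rewrite !(submx_trans _ sVU).
Qed.

Lemma eqmx_tot_iso m1 m2 (V : 'M[F]_(m1, n)) (U : 'M[F]_(m2, n)) :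
  (V :=: U)%MS -> tot_iso pf V = tot_iso pf U.
Proof. by move=> eqVU; apply/idP/idP; apply: tot_isoS; rewrite eqVU. Qed.

Lemma tot_iso_form m (U : 'M[F]_(m, n)) u v :
  tot_iso pf U -> (u <= U)%MS -> (v <= U)%MS -> form u v = 0.
Proof.
rewrite -pformE; case: pf => [M|M|s M] /= /forallP isoU su sv.
  have qU0 w : (w <= U)%MS -> qform M w = 0 by move=> sw; apply/eqP/(implyP (isoU w)).
  by rewrite !qU0 ?subr0 ?addmx_sub.
all: by have /forallP/(_ v) := isoU u; rewrite su sv => /eqP.
Qed.

Lemma tot_iso_adds m1 m2 (U : 'M[F]_(m1, n)) (V : 'M[F]_(m2, n)) : nondeg pf ->
  tot_iso pf U -> tot_iso pf V -> (U <= perpmx V)%MS -> tot_iso pf (U + V)%MS.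
Proof.
move=> ndg isoU isoV /perpmxP UV0.
have form0 w1 w2 : (w1 <= U + V)%MS -> (w2 <= U + V)%MS -> form w1 w2 = 0.
  case/sub_addsmxP=> -[D1 E1] -> /sub_addsmxP[[D2 E2] ->] /=.
  rewrite !formDl !formDr (UV0 (D1 *m U) (E2 *m V)) ?submxMl //.
  rewrite (form_eq0C ndg (UV0 (D2 *m U) (E1 *m V) _ _)) ?submxMl //.
  by rewrite (tot_iso_form isoU) ?(tot_iso_form isoV) ?submxMl // !addr0.
have pform0 w1 w2 : (w1 <= U + V)%MS -> (w2 <= U + V)%MS -> pform pf w1 w2 = 0.
  by move=> s1 s2; rewrite pformE form0.
move: isoU isoV pform0; case: pf => [M|M|s M] /= /forallP isoU /forallP isoV pform0.
  apply/forallP => w; apply/implyP; case/sub_addsmxP => -[D E] -> /=.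
  have := pform0 (D *m U) (E *m V).
  rewrite (eqP (implyP (isoU _) (submxMl D U))) (eqP (implyP (isoV _) (submxMl E V))).
  rewrite !subr0 => -> //.
    exact: submx_trans (submxMl D U) (addsmxSl U V).
  exact: submx_trans (submxMl E V) (addsmxSr U V).
all: apply/forallP => w1; apply/forallP => w2.
all: by apply/implyP => s1; apply/implyP => s2; rewrite pform0.
Qed.

Lemma in_perpE (p : 'rV[F]_n) (U : 'M[F]_n) :
  in_perp pf p U = (U <= perpmx p)%MS.
Proof.
apply/forallP/perpmxP => [Up0 a b sa /submxP[D ->]|Up0 u].
  by rewrite (mx11_scalar D) mul_scalar_mx formZr -pformE (eqP (implyP (Up0 a) sa)) mulr0.
by apply/implyP => su; rewrite pformE Up0.
Qed.

End Forms.

Section Generators.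
Variables (F : finFieldType) (n : nat) (pf : polar_form F n) (r : nat).
Hypotheses (ndg : nondeg pf) (prk : polar_rank pf r).
Local Notation q := #|F|.
Local Notation perpmx := (perpmx pf).

Lemma tot_iso_rank_le m (U : 'M[F]_(m, n)) : tot_iso pf U -> (\rank U <= r)%N.
Proof. by move=> isoU; rewrite -mxrank_gen prk.2 // (eqmx_tot_iso _ (genmxE U)). Qed.

Lemma polar_rank_gt0 m (H : 'M[F]_(m, n)) (x : 'rV[F]_n) :
  tot_iso pf x -> ~~ (x <= H)%MS -> (0 < r)%N.
Proof.
move=> isox xH; have := tot_iso_rank_le isox; rewrite rank_rV.
by case: eqP xH => // ->; rewrite sub0mx.
Qed.

Lemma mxrank_cap_perpmx (G : 'M[F]_n) (x : 'rV[F]_n) :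
  tot_iso pf G -> \rank G = r -> tot_iso pf x -> ~~ (x <= G)%MS ->
  \rank (G :&: perpmx x)%MS = r.-1.
Proof.
move=> isoG rG isox xG.
have := mxrank_sum_cap G (perpmx x).
have := mxrank_perpmx pf x; have := rank_leq_row x.
have := rank_leq_col (G + perpmx x)%MS; have := rank_leq_col G.
suff : (\rank (G :&: perpmx x)%MS < r)%N by lia.
rewrite ltnNge -rG; apply/negP => rGx.
have Gx : (G <= perpmx x)%MS.
  apply: submx_trans (capmxSr G _); rewrite -(mxrank_leqif_sup (capmxSl G _)).2.
  by rewrite eqn_leq rGx mxrankS ?capmxSl.
have := tot_iso_rank_le (tot_iso_adds ndg isoG isox Gx).
by rewrite mxrank_adds_rV xG rG addn1 ltnn.
Qed.

(* The points of a generator [G0] orthogonal to a complement of [U :&: G0] in [U]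
   are orthogonal to all of [U], and there are too many of them to lie in [U]. *)
Lemma tot_iso_extend (U : 'M[F]_n) : tot_iso pf U -> (\rank U < r)%N ->
  exists x : 'rV[F]_n, [/\ tot_iso pf x, (U <= perpmx x)%MS & ~~ (x <= U)%MS].
Proof.
move=> isoU rU; have [[G0 /andP[isoG0 /eqP rG0]] _] := prk.
pose U' := (U :\: G0)%MS; pose K := (G0 :&: perpmx U')%MS.
have rU' := mxrank_cap_compl U G0; rewrite -/U' in rU'.
have rK : (r - \rank U' <= \rank K)%N.
  have := mxrank_sum_cap G0 (perpmx U'); have := mxrank_perpmx pf U'.
  have := rank_leq_col (G0 + perpmx U')%MS; rewrite -/K; lia.
have KU0 : (K <= perpmx U)%MS.
  apply/perpmxP => a u sa; rewrite -(addsmx_diff_cap_eq U G0) -/U'.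
  case/sub_addsmxP => -[D1 D2] /= ->; rewrite formDr.
  rewrite (perpP _ _ _ (submx_trans sa (capmxSr _ _)) _ (submxMl _ _)) add0r.
  apply: (tot_iso_form isoG0); first exact: submx_trans sa (capmxSl _ _).
  exact: submx_trans (submxMl _ _) (capmxSr _ _).
have /row_subPn[i xU] : ~~ (K <= U)%MS.
  apply/negP => KU; have := mxrankS (_ : (K <= U :&: G0)%MS).
  by rewrite sub_capmx KU capmxSl => /(_ isT); lia.
have sxK := row_sub i K.
exists (row i K); split=> //.
  by apply: tot_isoS isoG0; apply: submx_trans sxK (capmxSl _ _).
apply/perpmxP => a b sa sb; apply: form_eq0C => //.
by apply/(perpP _ _ _ (submx_trans sb (submx_trans sxK KU0))).
Qed.

Variable qe : nat.
Hypothesis gp : gen_param pf r qe.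

Definition gens_over (U : 'M[F]_n) : {set 'M[F]_n} := [set G in kspaces pf r | (U <= G)%MS].

Definition hyper_avoiding (U : 'M[F]_n) (x : 'rV[F]_n) : {set 'M[F]_n} :=
  [set H in kspaces pf r.-1 | [&& (U <= H)%MS, (H <= perpmx x)%MS & ~~ (x <= H)%MS]].

Lemma genmx_adds_gen (H : 'M[F]_n) (x : 'rV[F]_n) :
  tot_iso pf H -> \rank H = r.-1 -> tot_iso pf x -> (H <= perpmx x)%MS ->
  ~~ (x <= H)%MS -> <<(H + x)%MS>>%MS \in kspaces pf r.
Proof.
move=> isoH rH isox Hx xH.
have r_gt0 := polar_rank_gt0 isox xH.
rewrite inE /is_subspace genmx_id eqxx mxrank_gen mxrank_adds_rV xH rH.
by rewrite (eqmx_tot_iso _ (genmxE _)) tot_iso_adds //= andbT; apply/eqP; lia.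
Qed.

Lemma card_gens_over_avoiding (H : 'M[F]_n) (x : 'rV[F]_n) :
  tot_iso pf H -> \rank H = r.-1 -> tot_iso pf x -> (H <= perpmx x)%MS ->
  ~~ (x <= H)%MS -> #|[set G in gens_over H | ~~ (x <= G)%MS]| = qe.
Proof.
move=> isoH rH isox Hx xH.
have r_gt0 := polar_rank_gt0 isox xH.
have := gp isoH rH.
rewrite -(cardID [pred G | (x <= G)%MS]) -/(gens_over H).
have over_x : [predI gens_over H & [pred G | (x <= G)%MS]] =i pred1 <<(H + x)%MS>>%MS.
  move=> G; rewrite !inE /=; apply/idP/eqP => [/andP[/andP[GP HG] xG]|->].
    case/and3P: GP => sG /eqP rG _; apply/esym/genmx_subspace_sub; rewrite ?addsmx_sub ?HG //.
    by rewrite rG mxrank_adds_rV xH rH; lia.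
  have := genmx_adds_gen isoH rH isox Hx xH; rewrite inE => ->.
  by rewrite !genmxE addsmxSl addsmxSr.
rewrite (eq_card over_x) card1 add1n => -[<-]; apply: eq_card => G.
by rewrite !inE andbC.
Qed.

Lemma card_gens_over_notin (U : 'M[F]_n) (x : 'rV[F]_n) :
  tot_iso pf x -> (U <= perpmx x)%MS ->
  #|[set G in gens_over U | ~~ (x <= G)%MS]| = (#|hyper_avoiding U x| * qe)%N.
Proof.
move=> isox Ux; rewrite -sum1_card -sum_nat_const.
rewrite (partition_big (fun G => <<(G :&: perpmx x)%MS>>%MS) (mem (hyper_avoiding U x))) /=.
  apply: eq_bigr => H; rewrite !inE => /andP[/and3P[sH /eqP rH isoH] /and3P[UH Hx xH]].
  rewrite -(card_gens_over_avoiding isoH rH isox Hx xH) -sum1_card.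
  apply: eq_bigl => G; rewrite !inE.
  apply/idP/idP => [/andP[/andP[/andP[GP _] xG] /eqP <-]|/andP[/andP[GP HG] xG]].
    by rewrite GP xG genmxE capmxSl.
  rewrite GP xG (submx_trans UH HG) /=; case/and3P: GP => _ /eqP rG isoG.
  apply/eqP/genmx_subspace_sup => //; first by rewrite sub_capmx HG.
  by rewrite (mxrank_cap_perpmx isoG rG isox xG) rH.
move=> G; rewrite !inE => /andP[/andP[/and3P[sG /eqP rG isoG] UG] xG].
rewrite /is_subspace genmx_id eqxx mxrank_gen (mxrank_cap_perpmx isoG rG isox xG) eqxx.
rewrite (eqmx_tot_iso _ (genmxE _)) (tot_isoS (capmxSl _ _) isoG) !genmxE.
rewrite sub_capmx UG Ux capmxSr /=.
by apply: contra xG => /submx_trans; apply; apply: capmxSl.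
Qed.

Lemma card_hyper_avoiding (U : 'M[F]_n) (x : 'rV[F]_n) :
  tot_iso pf x -> ~~ (x <= U)%MS -> (\rank U < r)%N ->
  #|hyper_avoiding U x| = (#|gens_over <<(U + x)%MS>>%MS| * q ^ (r.-1 - \rank U))%N.
Proof.
move=> isox xU rU; set m := (r.-1 - \rank U)%N.
have rm : r.-1 = (\rank U + m)%N by rewrite /m; lia.
rewrite -sum1_card -sum_nat_const.
rewrite (partition_big (fun H => <<(H + x)%MS>>%MS) (mem (gens_over <<(U + x)%MS>>%MS))) /=.
  apply: eq_bigr => G; rewrite !inE genmxE => /andP[/and3P[sG /eqP rG isoG] UxG].
  have xG := submx_trans (addsmxSr U x) UxG.
  rewrite -(card_subspaces_avoiding UxG xU (_ : _ = (\rank U + m).+1)); last by lia.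
  rewrite -sum1_card; apply: eq_bigl => H; rewrite !inE.
  apply/idP/idP => [/andP[/andP[/and3P[sH /eqP rH _] /and3P[UH _ xH]] /eqP <-]|].
    by rewrite sH UH genmxE addsmxSl rH rm eqxx xH.
  case/andP=> /and4P[sH UH HG /eqP rH] xH.
  have Hx : (H <= perpmx x)%MS.
    apply/perpmxP => a b sa sb; apply: (tot_iso_form isoG); last exact: submx_trans sb xG.
    exact: submx_trans sa HG.
  rewrite sH (tot_isoS HG isoG) UH Hx xH rH rm eqxx /=.
  apply/eqP/genmx_subspace_sub; rewrite ?addsmx_sub ?HG //.
  by rewrite mxrank_adds_rV xH rH rG; lia.
move=> H; rewrite !inE => /andP[/and3P[sH /eqP rH isoH] /and3P[UH Hx xH]].
have := genmx_adds_gen isoH rH isox Hx xH; rewrite inE => ->.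
by rewrite !genmxE addsmxS.
Qed.

(* A generator through [U] either contains [x] or meets [x^perp] in a member of
   [hyper_avoiding U x]; each such member lies in [qe] generators missing [x], and
   a generator through [U + x] has [q ^ (r.-1 - \rank U)] of them as hyperplanes. *)
Lemma card_gens_over_step (U : 'M[F]_n) (x : 'rV[F]_n) :
  tot_iso pf x -> (U <= perpmx x)%MS -> ~~ (x <= U)%MS -> (\rank U < r)%N ->
  #|gens_over U| = (#|gens_over <<(U + x)%MS>>%MS| * (1 + qe * q ^ (r.-1 - \rank U)))%N.
Proof.
move=> isox Ux xU rU; rewrite -(cardID [pred G | (x <= G)%MS] (gens_over U)).
have -> : #|[predI gens_over U & [pred G | (x <= G)%MS]]| = #|gens_over <<(U + x)%MS>>%MS|.
  by apply: eq_card => G; rewrite !inE genmxE addsmx_sub -!andbA.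
have -> : #|[predD gens_over U & [pred G | (x <= G)%MS]]|
          = #|[set G in gens_over U | ~~ (x <= G)%MS]|.
  by apply: eq_card => G; rewrite !inE andbC.
by rewrite card_gens_over_notin // card_hyper_avoiding //; ring.
Qed.

Definition ngens d := (\prod_(i < d) (1 + qe * q ^ i))%N.

Lemma ngensS d : ngens d.+1 = (ngens d * (1 + qe * q ^ d))%N.
Proof. by rewrite /ngens big_ord_recr. Qed.

Lemma ngens_gt0 d : (0 < ngens d)%N.
Proof. by apply: prodn_gt0 => i; rewrite add1n. Qed.

Lemma card_gens_over (U : 'M[F]_n) :
  tot_iso pf U -> (\rank U <= r)%N -> #|gens_over U| = ngens (r - \rank U).
Proof.
move=> isoU rU; have [d rUd] : exists d, (\rank U + d)%N = r by exists (r - \rank U)%N; lia.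
have -> : (r - \rank U)%N = d by lia.
elim: d U isoU {rU} rUd => [|d IHd] U isoU rUd.
  rewrite /ngens big_ord0 -(cards1 <<U>>%MS); congr #|pred_of_set _|.
  apply/setP => G; rewrite !inE; apply/idP/eqP => [/andP[/and3P[sG /eqP rG _] UG]|->].
    by apply/esym/genmx_subspace_sub; rewrite // rG -rUd addn0.
  rewrite /is_subspace genmx_id mxrank_gen (eqmx_tot_iso _ (genmxE U)) isoU genmxE.
  by rewrite submx_refl -rUd addn0 !eqxx.
have rU : (\rank U < r)%N by lia.
have [x [isox Ux xU]] := tot_iso_extend isoU rU.
rewrite (card_gens_over_step isox Ux xU rU) (IHd <<(U + x)%MS>>%MS).
- by rewrite ngensS; congr (_ * (1 + qe * q ^ _))%N; lia.
- by rewrite (eqmx_tot_iso _ (genmxE _)) tot_iso_adds.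
by rewrite mxrank_gen mxrank_adds_rV xU; lia.
Qed.

End Generators.

Section DoubleCounting.
Variables (F : finFieldType) (n : nat) (pf : polar_form F n) (r qe k : nat).
Hypotheses (ndg : nondeg pf) (prk : polar_rank pf r) (gp : gen_param pf r qe).
Hypothesis le_kr : (k <= r)%N.
Local Notation ngens := (ngens F qe).
Local Notation qprod := (qprod F).

Lemma card_kspaces_gens (P : pred 'M[F]_n) :
  (#|[set U in kspaces pf k | P U]| * ngens (r - k)
   = \sum_(G in kspaces pf r) #|[set U in kspaces pf k | P U & (U <= G)%MS]|)%N.
Proof.
rewrite -sum_nat_const.
rewrite (eq_bigr (fun U => \sum_(G in kspaces pf r | (U <= G)%MS) 1)%N); last first.
  move=> U; rewrite !inE => /andP[/and3P[_ /eqP rU isoU] _]; rewrite sum1dep_card.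
  have := card_gens_over ndg prk gp isoU; rewrite rU => /(_ le_kr) <-.
  by apply: eq_card => G; rewrite !inE.
rewrite (exchange_big_dep (mem (kspaces pf r))) /=; last by move=> U G _ /andP[].
apply: eq_bigr => G; rewrite inE => GP; rewrite sum1dep_card; apply: eq_card => U.
by rewrite !inE GP /= [RHS]andbA.
Qed.

Lemma card_kspaces_sub (G A : 'M[F]_n) (P : pred 'M[F]_n) :
  tot_iso pf A -> (forall U, P U && (U <= G)%MS = (U <= A)%MS) ->
  (#|[set U in kspaces pf k | P U & (U <= G)%MS]| * qprod k 0 k
   = qprod (\rank A) 0 k)%N.
Proof.
move=> isoA PGA; rewrite -card_subspaces; congr (_ * _)%N.
apply: eq_card => U; rewrite !inE PGA sub0mx /=.
apply/andP/and3P => [[/and3P[sU rU _] UA]|[sU UA rU]]; first by split.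
by split=> //; rewrite sU rU (tot_isoS UA isoA).
Qed.

Lemma card_gens : #|kspaces pf r| = ngens r.
Proof.
have [[G0 /andP[isoG0 _]] _] := prk; have iso0 := tot_isoS (sub0mx n G0) isoG0.
have := card_gens_over ndg prk gp iso0 (tot_iso_rank_le prk iso0).
by rewrite mxrank0 subn0 => <-; apply: eq_card => G; rewrite !inE sub0mx andbT.
Qed.

Lemma card_kspaces :
  (#|kspaces pf k| * ngens (r - k) * qprod k 0 k = ngens r * qprod r 0 k)%N.
Proof.
have := card_kspaces_gens predT.
rewrite (eq_card (B := kspaces pf k)) => [->|U]; last by rewrite !inE andbT.
rewrite big_distrl /= -card_gens -sum_nat_const; apply: eq_bigr => G.
rewrite inE => /and3P[_ /eqP <- isoG]; exact: (card_kspaces_sub (P := predT) isoG).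
Qed.

Lemma card_kspaces_perp (p : 'rV[F]_n) : p != 0 -> tot_iso pf p ->
  (#|[set U in kspaces pf k | in_perp pf p U]| * ngens (r - k) * qprod k 0 k
   = ngens (r - 1) * qprod r 0 k + (ngens r - ngens (r - 1)) * qprod (r - 1) 0 k)%N.
Proof.
move=> p_neq0 isop; rewrite card_kspaces_gens big_distrl /= (bigID (fun G => p <= G)%MS) /=.
rewrite (eq_bigr (fun _ => qprod r 0 k)); last first.
  move=> G /andP[]; rewrite inE => /and3P[_ /eqP <- isoG] pG.
  apply: (card_kspaces_sub isoG) => U; rewrite in_perpE.
  apply/andP/idP => [[]//|UG]; split=> //; apply/perpmxP => a b aU bp.
  by apply: (tot_iso_form isoG); [apply: submx_trans UG | apply: submx_trans pG].
rewrite [X in (_ + X)%N](eq_bigr (fun _ => qprod (r - 1) 0 k)); last first.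
  move=> G /andP[]; rewrite inE => /and3P[_ /eqP rG isoG] pG.
  rewrite subn1 -(mxrank_cap_perpmx ndg prk isoG rG isop pG).
  apply: (card_kspaces_sub (tot_isoS (capmxSl _ _) isoG)) => U.
  by rewrite in_perpE sub_capmx andbC.
have isop' : tot_iso pf <<p>>%MS by rewrite (eqmx_tot_iso _ (genmxE p)).
have := card_gens_over ndg prk gp isop' (tot_iso_rank_le prk isop').
rewrite mxrank_gen rank_rV p_neq0 => card_gens_p.
have gens_pE : kspaces pf r :&: [set G | (p <= G)%MS] = gens_over pf r <<p>>%MS.
  by apply/setP => G; rewrite !inE genmxE.
rewrite !sum_nat_cond_const (setIdE _ (fun G => p <= G)%MS) gens_pE card_gens_p.
congr (_ * _ + _ * _)%N.
rewrite -card_gens -(cardsID [set G | (p <= G)%MS] (kspaces pf r)) gens_pE card_gens_p addKn.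
by congr #|pred_of_set _|; apply/setP => G; rewrite !inE andbC.
Qed.

Lemma card_kspaces_perp_ratio (p : 'rV[F]_n) : (k < r)%N -> p != 0 -> tot_iso pf p ->
  let q : rat := #|F|%:R in let e : rat := qe%:R * q ^+ (r - 1) in
  #|[set U in kspaces pf k | in_perp pf p U]|%:R
    = (1 + e * ((q ^+ (r - k) - 1) / (q ^+ r - 1))) / (1 + e) * #|kspaces pf k|%:R.
Proof.
move=> lt_kr p_neq0 isop q e.
have r1 : (r - 1).+1 = r by lia.
have q_gt1 : (1 < #|F|)%N := card_finNzRing_gt1 F.
have ngensr : ngens r = (ngens (r - 1) * (1 + qe * #|F| ^ (r - 1)))%N.
  by rewrite -ngensS r1.
have s_neq0 : q ^+ r - 1 != 0 by apply: card_expr_sub1_neq0; lia.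
have P2E : (qprod (r - 1) 0 k)%:R
           = (qprod r 0 k)%:R * (q ^+ (r - k) - 1) / (q ^+ r - 1).
  have le_kr1 : (k <= r - 1)%N by lia.
  have := qprodS_mul F le_kr1; rewrite r1 => /(congr1 (fun m => m%:R : rat)).
  by rewrite !natrM !natrB ?expn_gt0 ?(ltnW q_gt1) // !natrX -/q => <-; rewrite mulfK.
have w_neq0 : (ngens (r - k))%:R * (qprod k 0 k)%:R != 0 :> rat.
  by rewrite -natrM pnatr_eq0 -lt0n muln_gt0 ngens_gt0 (qprod_gt0 F 0 k).
have e1_neq0 : 1 + e != 0 by rewrite /e /q -natrX -natrM addrC natr1 pnatr_eq0.
have := card_kspaces; rewrite ngensr -!mulnA => /(congr1 (fun m => m%:R : rat)).
rewrite !natrM natrD natrM natrX -/q -/e => NE.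
have := card_kspaces_perp p_neq0 isop; rewrite ngensr mulnDr muln1 addKn -!mulnA.
move=> /(congr1 (fun m => m%:R : rat)); rewrite natrD !natrM natrX -/q P2E => NHE.
apply: (mulIf w_neq0); rewrite NHE -[RHS]mulrA NE /e.
by field; rewrite -/e e1_neq0 s_neq0.
Qed.

End DoubleCounting.

Theorem lemma5p2 (F : finFieldType) (n r k e2 qe : nat)
  (pf : polar_form F n) (p : 'rV[F]_n) :
  nondeg pf -> polar_rank pf r ->
  (qe ^ 2 = #|F| ^ e2)%N -> gen_param pf r qe ->
  (k.+1 <= r)%N -> p != 0 -> tot_iso pf p ->
  (#|[set U in kspaces pf k | in_perp pf p U]|)%:R =
    ((#|F|%:R : rat) ^+ (2 * r - k - 1)%N * qe%:R + #|F|%:R ^+ r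
       - #|F|%:R ^+ (r - 1)%N * qe%:R - 1)
    / ((#|F|%:R ^+ r - 1) * (#|F|%:R ^+ (r - 1)%N * qe%:R + 1))
    * (#|kspaces pf k|)%:R.
Proof.
move=> ndg prk _ gp lt_kr p_neq0 isop.
rewrite (card_kspaces_perp_ratio ndg prk gp (ltnW lt_kr) lt_kr p_neq0 isop) /=.
have -> : (2 * r - k - 1 = r - 1 + (r - k))%N by lia.
have s_neq0 : (#|F|%:R ^+ r - 1 : rat) != 0 by apply: card_expr_sub1_neq0; lia.
have e1_neq0 : (#|F|%:R ^+ (r - 1) * qe%:R + 1 : rat) != 0.
  by rewrite -natrX -natrM natr1 pnatr_eq0.
by rewrite exprD; congr (_ * _); field; rewrite e1_neq0 s_neq0.
Qed.
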